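(* Let $\mathcal{X}\subseteq\mathbb{R}^d$ be closed convex, $\mathcal{Z}$ a set, $f:\mathcal{X}\times\mathcal{Z}\to\mathbb{R}$ with $f(\cdot,z)$ convex and $L$-Lipschitz for all $z$, and $S=(z_1,\dots,z_n)\in\mathcal{Z}^n$ with $F_S(x)=\frac1n\sum_{i=1}^nf(x,z_i)$. Let $\pi$ be an arbitrary permutation of $[n]$ and consider fixed-permutation SGD with step size constant within each epoch: $x^k_1=x^{k-1}_{n+1}$ and $x^k_{t+1}=\mathsf{Proj}_{\mathcal{X}}(x^k_t-\eta_k\nabla f(x^k_t,z_{\pi(t)}))$ for $t=1,\dots,n$, where $\eta_k>0$. Write $x^k=x^k_1$. Then for every epoch $k$ and every $y\in\mathcal{X}$, $$\eta_k[F_S(x^k)-F_S(y)]\le\frac1{2n}\big[\|x^k-y\|^2-\|x^{k+1}-y\|^2\big]+\frac{\eta_k^2L^2(n+2)}{2}.$$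
   Context: $\|\cdot\|$ is the Euclidean norm and $\mathsf{Proj}_{\mathcal{X}}$ the Euclidean projection; $\nabla f(x,z)$ is a fixed selection of a subgradient of $f(\cdot,z)$ at $x$, assumed to have norm at most $L$ (Lipschitz on an open set containing $\mathcal{X}$). *)

From HB Require Import structures.
From mathcomp Require Import all_boot all_order all_algebra all_fingroup.
From mathcomp Require Import all_classical all_reals all_analysis.
Set Implicit Arguments. Unset Strict Implicit. Unset Printing Implicit Defensive.
Import Order.TTheory GRing.Theory Num.Theory.
Import numFieldNormedType.Exports.
Local Open Scope ring_scope.
Local Open Scope classical_set_scope.

Definition dotv (R : realType) (d : nat) (u v : 'rV[R]_d) : R :=
  \sum_(i < d) u ord0 i * v ord0 i.
Definition enorm (R : realType) (d : nat) (u : 'rV[R]_d) : R :=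
  Num.sqrt (dotv u u).

Definition cvx_set (R : realType) (d : nat) (X : set 'rV[R]_d) : Prop :=
  forall x y t, X x -> X y -> 0 <= t -> t <= 1 -> X (t *: x + (1 - t) *: y).

Definition cvx_fun_on (R : realType) (d : nat) (X : set 'rV[R]_d)
  (h : 'rV[R]_d -> R) : Prop :=
  forall x y t, X x -> X y -> 0 <= t -> t <= 1 ->
    h (t *: x + (1 - t) *: y) <= t * h x + (1 - t) * h y.

Definition lip_on (R : realType) (d : nat) (X : set 'rV[R]_d)
  (L : R) (h : 'rV[R]_d -> R) : Prop :=
  forall x y, X x -> X y -> `|h x - h y| <= L * enorm (x - y).

Definition is_euclid_proj (R : realType) (d : nat) (X : set 'rV[R]_d)
  (P : 'rV[R]_d -> 'rV[R]_d) : Prop :=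
  forall x, X (P x) /\ forall y, X y -> enorm (x - P x) <= enorm (x - y).

Definition subgrad_on (R : realType) (d : nat) (X : set 'rV[R]_d)
  (h : 'rV[R]_d -> R) (g : 'rV[R]_d -> 'rV[R]_d) : Prop :=
  forall x y, X x -> X y -> h y >= h x + dotv (g x) (y - x).

Definition emp_risk (R : realType) (d n : nat) (Z : Type)
  (f : 'rV[R]_d -> Z -> R) (S : 'I_n -> Z) (x : 'rV[R]_d) : R :=
  n%:R^-1 * \sum_(i < n) f x (S i).

Definition sgd_epoch (R : realType) (d n : nat) (Z : Type)
  (P : 'rV[R]_d -> 'rV[R]_d) (g : 'rV[R]_d -> Z -> 'rV[R]_d)
  (S : 'I_n -> Z) (pi : 'S_n) (eta : R) (x : 'rV[R]_d) : 'rV[R]_d :=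
  foldl (fun y (t : 'I_n) => P (y - eta *: g y (S (pi t)))) x (enum 'I_n).

(* Epoch iterates: x^0 = x0, x^{k+1} = epoch with step eta k applied to x^k.
   (Paper's epoch k corresponds to index k here, shifted by one.) *)
Fixpoint sgd_iter (R : realType) (d n : nat) (Z : Type)
  (P : 'rV[R]_d -> 'rV[R]_d) (g : 'rV[R]_d -> Z -> 'rV[R]_d)
  (S : 'I_n -> Z) (pi : 'S_n) (eta : nat -> R) (x0 : 'rV[R]_d) (k : nat)
  : 'rV[R]_d :=
  match k with
  | 0 => x0
  | k'.+1 => sgd_epoch P g S pi (eta k') (sgd_iter P g S pi eta x0 k')
  end.

From HB Require Import structures.
From mathcomp Require Import all_boot all_order all_algebra all_fingroup.
From mathcomp Require Import all_classical all_reals all_analysis.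
From mathcomp Require Import ring lra.
Import Order.TTheory GRing.Theory Num.Theory.
Import numFieldNormedType.Exports.
Local Open Scope ring_scope.
Local Open Scope classical_set_scope.

(* Within an epoch the iterates stay close to the starting point x: a projected
   step moves by at most eta L, since the projection is nonexpansive towards
   points of X, so after t steps f(., z) lies at most t eta L^2 below f(x, z).
   The usual one-step estimate of projected subgradient descent,
     |x_{t+1} - y|^2 <= |x_t - y|^2 - 2 eta (f(x_t, z) - f(y, z)) + eta^2 L^2,
   can therefore be charged to f(x, z) instead of f(x_t, z) at an extra cost of
   2 t eta^2 L^2.  Summing over an epoch, which visits every sample once, gives
     2 eta n (F_S(x) - F_S(y)) <= |x - y|^2 - |x' - y|^2 + eta^2 L^2 n^2. *)

Section EuclideanGeometry.
Context {R : realType} {d : nat}.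
Implicit Types (u v w : 'rV[R]_d) (c : R).

Lemma dotvC u v : dotv u v = dotv v u.
Proof. by apply: eq_bigr => i _; rewrite mulrC. Qed.

Lemma dotvDl u v w : dotv (u + v) w = dotv u w + dotv v w.
Proof. by rewrite /dotv -big_split; apply: eq_bigr => i _; rewrite mxE mulrDl. Qed.

Lemma dotvZl c u w : dotv (c *: u) w = c * dotv u w.
Proof. by rewrite /dotv mulr_sumr; apply: eq_bigr => i _; rewrite mxE mulrA. Qed.

Lemma dotvZr c u w : dotv w (c *: u) = c * dotv w u.
Proof. by rewrite dotvC dotvZl dotvC. Qed.

Lemma dotvNl u w : dotv (- u) w = - dotv u w.
Proof. by rewrite -scaleN1r dotvZl mulN1r. Qed.

Lemma dotvBl u v w : dotv (u - v) w = dotv u w - dotv v w.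
Proof. by rewrite dotvDl dotvNl. Qed.

Lemma dotvBr u v w : dotv w (u - v) = dotv w u - dotv w v.
Proof. by rewrite dotvC dotvBl !(dotvC w). Qed.

Lemma dotv_ge0 u : 0 <= dotv u u.
Proof. by apply: sumr_ge0 => i _; rewrite -expr2 sqr_ge0. Qed.

Lemma enorm_ge0 u : 0 <= enorm u.
Proof. exact: sqrtr_ge0. Qed.

Lemma enorm_sqr u : enorm u ^+ 2 = dotv u u.
Proof. by rewrite sqr_sqrtr // dotv_ge0. Qed.

Lemma enormZ c u : enorm (c *: u) = `|c| * enorm u.
Proof.
by rewrite /enorm dotvZl dotvZr mulrA -expr2 sqrtrM ?sqr_ge0 // sqrtr_sqr.
Qed.

Lemma enormN u : enorm (- u) = enorm u.
Proof. by rewrite -scaleN1r enormZ normrN1 mul1r. Qed.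

Lemma enorm_sqrB u v :
  enorm (u - v) ^+ 2 = enorm u ^+ 2 - 2 * dotv u v + enorm v ^+ 2.
Proof. rewrite !enorm_sqr !dotvBl !dotvBr (dotvC v u); ring. Qed.

Lemma ler_enorm_sqr u v : (enorm u ^+ 2 <= enorm v ^+ 2) = (enorm u <= enorm v).
Proof. by rewrite ler_sqr ?nnegrE ?enorm_ge0. Qed.

End EuclideanGeometry.

Lemma ler0_le_scaled (R : realFieldType) (a b : R) :
  (forall t, 0 < t <= 1 -> a <= t * b) -> a <= 0.
Proof.
move=> le_ab; rewrite leNgt; apply/negP => a_gt0.
have b_ge_a : a <= b by rewrite -[b]mul1r; apply: le_ab; rewrite ltr01 lexx.
have b_gt0 : 0 < b := lt_le_trans a_gt0 b_ge_a.
have t_gt0 : 0 < a / (2 * b) by rewrite divr_gt0 ?mulr_gt0.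
have t_le1 : a / (2 * b) <= 1 by rewrite ler_pdivrMr ?mulr_gt0 // mul1r; lra.
have := le_ab (a / (2 * b)); rewrite t_gt0 t_le1 => /(_ isT).
have -> : a / (2 * b) * b = a / 2 by field; rewrite gt_eqF.
lra.
Qed.

Section EuclideanProjection.
Context {R : realType} {d : nat}.
Context {X : set 'rV[R]_d} {P : 'rV[R]_d -> 'rV[R]_d}.
Hypotheses (convX : cvx_set X) (projP : is_euclid_proj X P).

Lemma euclid_proj_in w : X (P w).
Proof. by case: (projP w). Qed.

Lemma euclid_proj_obtuse w y : X y -> dotv (w - P w) (y - P w) <= 0.
Proof.
move=> Xy; set e := w - P w; set h := y - P w.
apply: (@ler0_le_scaled _ _ (enorm h ^+ 2 / 2)) => t /andP[t_gt0 t_le1].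
have Xt : X (t *: y + (1 - t) *: P w).
  by apply: convX => //; [exact: euclid_proj_in | exact: ltW].
have := (projP w).2 _ Xt; rewrite -ler_enorm_sqr.
have -> : w - (t *: y + (1 - t) *: P w) = e - t *: h.
  by apply/rowP => i; rewrite /e /h !mxE; ring.
rewrite [enorm (e - _) ^+ 2]enorm_sqrB enormZ dotvZr exprMn.
rewrite (ger0_norm (ltW t_gt0)) => le_e.
rewrite -(ler_pM2l t_gt0); nra.
Qed.

Lemma euclid_proj_dist_le w y : X y -> enorm (P w - y) <= enorm (w - y).
Proof.
move=> Xy; rewrite -ler_enorm_sqr.
have -> : w - y = (w - P w) - (y - P w) by rewrite opprB addrA subrK.
rewrite [enorm (_ - (y - P w)) ^+ 2]enorm_sqrB -[P w - y]opprB enormN.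
have := euclid_proj_obtuse w _ Xy; have := enorm_ge0 (w - P w).
nra.
Qed.

End EuclideanProjection.

Definition sgd_step {R : realType} {d : nat} {Z : Type}
  (P : 'rV[R]_d -> 'rV[R]_d) (g : 'rV[R]_d -> Z -> 'rV[R]_d) (eta : R)
  (u : 'rV[R]_d) (z : Z) : 'rV[R]_d :=
  P (u - eta *: g u z).

Lemma sgd_epochE {R : realType} {d n : nat} {Z : Type}
  (P : 'rV[R]_d -> 'rV[R]_d) (g : 'rV[R]_d -> Z -> 'rV[R]_d)
  (S : 'I_n -> Z) (pi : 'S_n) (eta : R) (x : 'rV[R]_d) :
  sgd_epoch P g S pi eta x
  = foldl (sgd_step P g eta) x [seq S (pi t) | t <- enum 'I_n].
Proof. by rewrite /sgd_epoch; elim: (enum 'I_n) x => /=. Qed.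

Section ProjectedSubgradientSteps.
Context {R : realType} {d : nat} {Z : Type}.
Context {X : set 'rV[R]_d} {f : 'rV[R]_d -> Z -> R} {L : R}.
Context {g : 'rV[R]_d -> Z -> 'rV[R]_d} {P : 'rV[R]_d -> 'rV[R]_d} {eta : R}.
Hypotheses (convX : cvx_set X) (projP : is_euclid_proj X P).
Hypotheses (lipf : forall z, lip_on X L (f^~ z))
  (subgrad_g : forall z, subgrad_on X (f^~ z) (g^~ z))
  (g_bounded : forall x z, X x -> enorm (g x z) <= L).
Hypothesis eta_gt0 : 0 < eta.

Local Notation step := (sgd_step P g eta).

Lemma sgd_steps_in u zs : X u -> X (foldl step u zs).
Proof. by elim: zs u => [|z zs IH] u Xu //=; exact/IH/(euclid_proj_in projP). Qed.

Lemma sgd_step_sqr_dist_le u z y : X u -> X y ->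
  enorm (step u z - y) ^+ 2
  <= enorm (u - y) ^+ 2 - 2 * eta * (f u z - f y z) + eta ^+ 2 * L ^+ 2.
Proof.
move=> Xu Xy; rewrite /sgd_step.
apply: le_trans (_ : enorm (u - eta *: g u z - y) ^+ 2 <= _).
  by rewrite ler_enorm_sqr (euclid_proj_dist_le convX projP).
have -> : u - eta *: g u z - y = (u - y) - eta *: g u z.
  by apply/rowP => i; rewrite !mxE; ring.
rewrite [enorm (_ - eta *: _) ^+ 2]enorm_sqrB dotvZr enormZ exprMn.
rewrite (ger0_norm (ltW eta_gt0)).
have gu_le : enorm (g u z) ^+ 2 <= L ^+ 2.
  by have := g_bounded _ z Xu; have := enorm_ge0 (g u z); nra.
have := subgrad_g z _ _ Xu Xy; rewrite /= -opprB dotvC dotvNl => sub_ineq.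
have := ler_wpM2l (ltW eta_gt0) sub_ineq.
have := ler_wpM2l (sqr_ge0 eta) gu_le.
nra.
Qed.

Lemma sgd_step_drift u z z' : X u -> f u z' - f (step u z) z' <= eta * L ^+ 2.
Proof.
move=> Xu; have L_ge0 : 0 <= L := le_trans (enorm_ge0 _) (g_bounded _ z Xu).
have move_le : enorm (step u z - u) <= eta * L.
  apply: le_trans (euclid_proj_dist_le convX projP _ _ Xu) _.
  rewrite addrAC subrr add0r enormN enormZ (ger0_norm (ltW eta_gt0)).
  by apply: ler_wpM2l; [exact: ltW | exact: g_bounded].
have := lipf z' _ _ (euclid_proj_in projP (u - eta *: g u z)) Xu.
have := ler_norm (f u z' - f (step u z) z'); rewrite distrC.
rewrite /sgd_step in move_le *; nra.
Qed.

Lemma sgd_steps_sqr_dist_le x y (m : nat) u zs : X u -> X y ->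
  (forall z, f x z - f u z <= m%:R * eta * L ^+ 2) ->
  enorm (foldl step u zs - y) ^+ 2
  <= enorm (u - y) ^+ 2 - 2 * eta * \sum_(z <- zs) (f x z - f y z)
     + eta ^+ 2 * L ^+ 2 * ((size zs)%:R * (2 * m%:R + (size zs)%:R)).
Proof.
move=> + Xy; elim: zs u m => [|z zs IH] u m Xu drift /=.
  by rewrite big_nil; lra.
have Xu' : X (step u z) := euclid_proj_in projP _.
have drift' z' : f x z' - f (step u z) z' <= m.+1%:R * eta * L ^+ 2.
  by have := drift z'; have := sgd_step_drift _ z z' Xu; rewrite -natr1; lra.
apply: le_trans (IH _ _ Xu' drift') _.
have := sgd_step_sqr_dist_le _ z _ Xu Xy.
have := ler_wpM2l (ltW eta_gt0) (drift z).
rewrite big_cons -natr1; nra.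
Qed.

Lemma sgd_pass_sqr_dist_le x y zs : X x -> X y ->
  enorm (foldl step x zs - y) ^+ 2
  <= enorm (x - y) ^+ 2 - 2 * eta * \sum_(z <- zs) (f x z - f y z)
     + eta ^+ 2 * L ^+ 2 * (size zs)%:R ^+ 2.
Proof.
move=> Xx Xy; have := sgd_steps_sqr_dist_le x y 0 x zs Xx Xy.
by rewrite mulr0n mulr0 add0r -expr2; apply=> z; rewrite subrr !mul0r.
Qed.

End ProjectedSubgradientSteps.

Lemma emp_risk_perm {R : realType} {d n : nat} {Z : Type}
  (f : 'rV[R]_d -> Z -> R) (S : 'I_n -> Z) (pi : 'S_n) (x : 'rV[R]_d) :
  \sum_(z <- [seq S (pi t) | t <- enum 'I_n]) f x z = n%:R * emp_risk f S x.
Proof.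
rewrite big_map big_enum /= /emp_risk [in RHS](reindex_perm pi) mulrA.
by case: n S pi => [|n] S pi; rewrite ?big_ord0 ?mulr0 // mulfV ?mul1r.
Qed.

Theorem lemmaC1 (R : realType) (d n : nat) (Z : Type)
  (X : set 'rV[R]_d) (f : 'rV[R]_d -> Z -> R) (L : R)
  (g : 'rV[R]_d -> Z -> 'rV[R]_d) (P : 'rV[R]_d -> 'rV[R]_d)
  (S : 'I_n -> Z) (pi : 'S_n) (eta : nat -> R) (x0 : 'rV[R]_d) :
  closed X -> cvx_set X ->
  (forall z, cvx_fun_on X (f^~ z)) ->
  (forall z, lip_on X L (f^~ z)) ->
  (forall z, subgrad_on X (f^~ z) (g^~ z)) ->
  (forall x z, X x -> enorm (g x z) <= L) ->
  is_euclid_proj X P ->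
  (0 < n)%N -> X x0 -> (forall k, 0 < eta k) ->
  forall (k : nat) (y : 'rV[R]_d), X y ->
    eta k * (emp_risk f S (sgd_iter P g S pi eta x0 k) - emp_risk f S y)
    <= (2 * n%:R)^-1 * (enorm (sgd_iter P g S pi eta x0 k - y) ^+ 2
                        - enorm (sgd_iter P g S pi eta x0 k.+1 - y) ^+ 2)
       + eta k ^+ 2 * L ^+ 2 * (n%:R + 2) / 2.
Proof.
move=> _ convX _ lipf subgrad_g g_bounded projP n_gt0 Xx0 eta_gt0 k y Xy.
have Xiter j : X (sgd_iter P g S pi eta x0 j).
  by elim: j => //= j IH; rewrite sgd_epochE; exact: sgd_steps_in.
have := sgd_pass_sqr_dist_le convX projP lipf subgrad_g g_bounded (eta_gt0 k)
  _ _ [seq S (pi t) | t <- enum 'I_n] (Xiter k) Xy.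
rewrite sumrB !emp_risk_perm size_map size_enum_ord -sgd_epochE /=.
set Fx := emp_risk f S _; set Fy := emp_risk f S y.
set dist_next := enorm (sgd_epoch _ _ _ _ _ _ - y) ^+ 2.
set dist_cur := enorm (sgd_iter _ _ _ _ _ _ _ - y) ^+ 2 => epoch_ineq.
have n_pos : (0 : R) < n%:R by rewrite ltr0n.
have E_ge0 : 0 <= eta k ^+ 2 * L ^+ 2 by rewrite mulr_ge0 ?sqr_ge0.
have two_n_pos : (0 : R) < 2 * n%:R by rewrite mulr_gt0.
rewrite -(ler_pM2l two_n_pos) [in leRHS]mulrDr mulVKf ?gt_eqF //.
nra.
Qed.
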